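(* Let $d\ge2$, $q\ge2$, let $p\in\mathbb{Z}/q\mathbb{Z}$ with $\gcd(p,q)=1$ (take the representative $1\le p\le q-1$), and let $p^*$ be the inverse of $p$ in $\mathbb{Z}/q\mathbb{Z}$. Let $t=(a_0,a_1,\dots,a_{q-1})\in\mathbb{T}$ (in $q$-tuple notation) have $\sigma_d$-orbit $\mathcal{O}$ of size $q$. Then $t$ is the least element of $\mathcal{O}$ and $\mathcal{O}$ is $\sigma_d$-rotational with rotation number $p/q$ if and only if $$a_0\le a_{p^*}\le a_{2p^*}\le\dots\le a_{-(p+1)p^*}<a_{-pp^*}\le\dots\le a_{(q-1)p^*},$$ i.e. $a_{kp^*}\le a_{(k+1)p^*}$ for all $0\le k\le q-2$, with strict inequality for $k=q-p-1$.
   Context: $\mathbb{T}=\mathbb{R}/\mathbb{Z}$, totally ordered by representatives in $[0,1)$; $\sigma_d(t)=dt$. An orbit $\mathcal{O}=\{t_0<\dots<t_{q-1}\}$ (indices in $\mathbb{Z}/q\mathbb{Z}$) is $\sigma_d$-rotational with rotation number $p/q$ if $\sigma_d(t_i)=t_{i+p}$ for all $i$. $q$-tuple notation: $(a_0,\dots,a_{q-1})$ with $a_i\in\{0,\dots,d-1\}$ denotes the point with base-$d$ expansion $0.\overline{a_0a_1\dots a_{q-1}}$; digit indices are read in $\mathbb{Z}/q\mathbb{Z}$. *)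

(* Points of T = R/Z are represented by their representatives
   in [0,1); since all points considered are periodic, they are rational. *)
From mathcomp Require Import all_boot all_order all_algebra.
Set Implicit Arguments. Unset Strict Implicit. Unset Printing Implicit Defensive.
Import Order.TTheory GRing.Theory Num.Theory.
Local Open Scope ring_scope.

Definition frac (x : rat) : rat := x - (Num.floor x)%:~R.

Definition sigma (d : nat) (x : rat) : rat := frac (d%:R * x).

(* the point (a_0,...,a_{q-1}) = 0.(a_0 ... a_{q-1}) repeated, base d, in T *)
Definition qtuple_pt (d q : nat) (a : nat -> nat) : rat :=
  frac ((\sum_(i < q) (a i * d ^ (q - 1 - i))%N%:R) / (d ^ q - 1)%N%:R).

Definition orbit_seq (d n : nat) (x : rat) : seq rat :=
  [seq iter j (sigma d) x | j <- iota 0 n].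

Definition orbit_size (d : nat) (x : rat) (q : nat) : Prop :=
  uniq (orbit_seq d q x) /\ iter q (sigma d) x = x.

Definition sorted_orbit (d q : nat) (x : rat) : seq rat :=
  sort <=%R (orbit_seq d q x).

Definition rotational (d q p : nat) (x : rat) : Prop :=
  forall i : nat, (i < q)%N ->
    sigma d (nth 0 (sorted_orbit d q x) i) = nth 0 (sorted_orbit d q x) ((i + p) %% q).

Definition least_in_orbit (d q : nat) (x : rat) : Prop :=
  forall y, y \in orbit_seq d q x -> x <= y.

(* The j-th iterate of t is the point 0.(a_j a_{j+1} ... a_{j+q-1}) repeated,
   so d * sigma^j(t) = a_j + sigma^{j+1}(t): of two orbit points the one with
   the smaller first digit is smaller, and with equal first digits they compare
   as their images do.  Put s_k = sigma^{k p*}(t), so that sigma(s_k) = s_{k+p}.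
   The orbit is rotational with rotation number p/q and least point t exactly
   when s_0 < s_1 < ... < s_{q-1}.  This monotonicity forces the digit
   inequalities, strictly at k = q-p-1 since equal digits there would give
   s_{q-1} < s_q = s_0.  Conversely, under the digit inequalities a descent
   s_{k+1} < s_k has equal first digits, so sigma carries it to a descent at
   k + p; as p generates Z/q, some descent lands at q-p-1, where the digits
   increase strictly. *)

From Pilot Require Import Defs.
From mathcomp Require Import all_boot all_order all_algebra zify.
Import Order.TTheory GRing.Theory Num.Theory.

Set Implicit Arguments.
Unset Strict Implicit.

Lemma sum_digits_lt (d n : nat) (b : nat -> nat) :
  (forall i, i < n -> b i < d) -> \sum_(i < n) b i * d ^ (n - 1 - i) < d ^ n.
Proof.
elim: n b => [|n IH] b b_lt; first by rewrite big_ord0 expn0.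
rewrite big_ord_recl subn0 subn1 /=.
have -> : \sum_(i < n) b (bump 0 i) * d ^ (n - bump 0 i) =
          \sum_(i < n) b i.+1 * d ^ (n - 1 - i).
  by apply: eq_bigr => i _; rewrite /bump /= add1n subnS subnAC subn1.
apply: (@leq_trans (b 0 * d ^ n + d ^ n)).
  by rewrite ltn_add2l (IH (fun i => b i.+1)) // => i; exact: (b_lt i.+1).
have d_gt0 : 0 < d by apply: leq_ltn_trans (b_lt 0 _).
by rewrite -mulSnr expnS leq_pmul2r ?expn_gt0 ?d_gt0 ?b_lt.
Qed.

(* [cyclic_num d q a j / (d ^ q - 1)] is the point 0.(a_j ... a_{j+q-1})
   repeated, digit indices taken mod q. *)
Definition cyclic_num (d q : nat) (a : nat -> nat) (j : nat) : nat :=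
  \sum_(i < q) a ((i + j) %% q) * d ^ (q - 1 - i).

Section CyclicNumerator.
Variables (d q : nat) (a : nat -> nat).

Lemma cyclic_numS j : 0 < q ->
  d * cyclic_num d q a j + a (j %% q) = a (j %% q) * d ^ q + cyclic_num d q a j.+1.
Proof.
case: q => [//|n] _; rewrite /cyclic_num big_ord_recl big_ord_recr /=.
have -> : (n + j.+1) %% n.+1 = j %% n.+1.
  by rewrite addnS -addSn -modnDml modnn add0n.
rewrite subn1 subnn expn0 muln1 mulnDr big_distrr /= -addnA mulnCA -expnS.
rewrite add0n subn0; congr (_ + (_ + _)); apply: eq_bigr => i _.
rewrite /bump /= add1n addnS addSn.
have -> : n - i = (n - i.+1).+1 by have := ltn_ord i; lia.
by rewrite expnS mulnCA.
Qed.

Lemma cyclic_num_mod j : cyclic_num d q a j = cyclic_num d q a (j %% q).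
Proof. by apply: eq_bigr => i _; rewrite modnDmr. Qed.

Hypothesis digit_lt : forall i, i < q -> a i < d.

Lemma cyclic_num_lt j : 0 < q -> cyclic_num d q a j < d ^ q.
Proof.
move=> q_gt0; apply: (@sum_digits_lt d q (fun i => a ((i + j) %% q))) => i _.
by rewrite digit_lt ?ltn_pmod.
Qed.

Lemma cyclic_num_max_succ j : 0 < q ->
  cyclic_num d q a j = d ^ q - 1 -> cyclic_num d q a j.+1 = d ^ q - 1.
Proof.
move=> q_gt0 Nj; have := cyclic_numS j q_gt0; have := cyclic_num_lt j.+1 q_gt0.
have aj_lt := digit_lt (ltn_pmod j q_gt0).
have : 0 < d ^ q by rewrite expn_gt0 (leq_ltn_trans _ aj_lt).
rewrite Nj; move: aj_lt; set D := d ^ q; set N := cyclic_num _ _ _ _; nia.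
Qed.

End CyclicNumerator.

Lemma frac_natD (n : nat) (y : rat) : (0 <= y < 1)%R -> Defs.frac (n%:R + y) = y.
Proof.
move=> /andP[y_ge0 y_lt1]; rewrite /Defs.frac.
suff -> : (Num.floor (n%:R + y) = n%:Z)%R by rewrite -pmulrn addrC addKr.
by apply: floor_def; rewrite -pmulrn intrD -pmulrn lerDl y_ge0 ltrD2l y_lt1.
Qed.

Definition orbit_pt (d : nat) (x : rat) (j : nat) : rat := iter j (sigma d) x.

Section PeriodicOrbit.
Variables (d q : nat) (x : rat).
Hypothesis orbit_q : orbit_size d x q.

Lemma orbit_pt_inj i j : i < q -> j < q -> orbit_pt d x i = orbit_pt d x j -> i = j.
Proof.
case: orbit_q => orbit_uniq _ iq jq eq_ij.
have size_orbit : size (orbit_seq d q x) = q by rewrite size_map size_iota.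
have nth_orbit k : k < q -> nth 0%R (orbit_seq d q x) k = orbit_pt d x k.
  by move=> kq; rewrite (nth_map 0) ?size_iota // nth_iota.
by apply/eqP; rewrite -(nth_uniq 0%R _ _ orbit_uniq) ?size_orbit ?nth_orbit ?eq_ij.
Qed.

Lemma orbit_pt_mod j : orbit_pt d x j = orbit_pt d x (j %% q).
Proof.
have period m : iter (m * q) (sigma d) x = x.
  by elim: m => [//|m IH]; rewrite mulSn iterD IH; case: orbit_q.
by rewrite {1}(divn_eq j q) addnC /orbit_pt iterD period.
Qed.

Local Notation S := (sorted_orbit d q x).

Lemma size_sorted_orbit : size S = q.
Proof. by rewrite size_sort size_map size_iota. Qed.

Lemma mem_sorted_orbit : S =i orbit_seq d q x.
Proof. exact/perm_mem/permEl/perm_sort. Qed.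

Lemma sorted_orbit_lt : sorted <%R S.
Proof.
rewrite lt_sorted_uniq_le sort_le_sorted andbT (perm_uniq (permEl (perm_sort _ _))).
by case: orbit_q.
Qed.

End PeriodicOrbit.

Section QtupleOrbit.
Local Open Scope ring_scope.
Variables (d q : nat) (a : nat -> nat).
Hypotheses (d_ge2 : (2 <= d)%N) (q_ge2 : (2 <= q)%N).
Hypothesis digit_lt : forall i, (i < q)%N -> (a i < d)%N.
Hypothesis orbit_q : orbit_size d (qtuple_pt d q a) q.

Local Notation x := (qtuple_pt d q a).
Local Notation N := (cyclic_num d q a).
Local Notation D := (d ^ q - 1)%N.

Let q_gt0 : (0 < q)%N. Proof. exact: ltnW. Qed.

Let D_gt0 : (0 < D)%N.
Proof. by rewrite subn_gt0 -(expn0 d) ltn_exp2l. Qed.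

Lemma qtuple_ptE : x = Defs.frac ((N 0)%:R / D%:R).
Proof.
rewrite /qtuple_pt natr_sum; congr (Defs.frac (_ / _)).
by apply: eq_bigr => i _; rewrite addn0 modn_small.
Qed.

Lemma cyclic_num_ltD j : (N j < D)%N.
Proof.
suff : N j <> D by have := cyclic_num_lt digit_lt j q_gt0; lia.
(* Otherwise every digit is d - 1 and t is the fixed point 0. *)
rewrite cyclic_num_mod => Nj.
have Nm m : N (j %% q + m) = D.
  by elim: m => [|m IH]; rewrite ?addn0 // addnS cyclic_num_max_succ.
have N0 : N 0 = D.
  rewrite -(Nm (q - j %% q)%N) subnKC; last exact/ltnW/ltn_pmod.
  by rewrite [RHS]cyclic_num_mod modnn.
have x0 : x = 0.
  by rewrite qtuple_ptE N0 divff ?pnatr_eq0 -?lt0n.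
have : orbit_pt d x 0 = orbit_pt d x 1.
  by rewrite /= x0 /sigma mulr0 /Defs.frac floor0 subr0.
by move/(orbit_pt_inj orbit_q) => /(_ q_gt0 q_ge2).
Qed.

Lemma cyclic_frac_ge0_lt1 j : 0 <= ((N j)%:R / D%:R : rat) < 1.
Proof.
have D_pos : 0 < D%:R :> rat by rewrite ltr0n.
rewrite divr_ge0 ?ler0n //= ltr_pdivrMr // mul1r ltr_nat.
exact: cyclic_num_ltD.
Qed.

Lemma mul_cyclic_frac j :
  d%:R * ((N j)%:R / D%:R) = (a (j %% q))%:R + (N j.+1)%:R / D%:R :> rat.
Proof.
have step : (d * N j = a (j %% q) * D + N j.+1)%N.
  by have := cyclic_numS d a j q_gt0; lia.
by rewrite mulrA -natrM step natrD natrM mulrDl mulfK ?pnatr_eq0 -?lt0n.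
Qed.

Lemma orbit_ptE j : orbit_pt d x j = (N j)%:R / D%:R.
Proof.
elim: j => [|j IH] /=.
  by rewrite qtuple_ptE -[RHS](frac_natD 0) ?add0r ?cyclic_frac_ge0_lt1.
by rewrite /= -/(orbit_pt d x j) IH /sigma mul_cyclic_frac frac_natD ?cyclic_frac_ge0_lt1.
Qed.

Lemma orbit_pt_digit j :
  d%:R * orbit_pt d x j = (a (j %% q))%:R + orbit_pt d x j.+1.
Proof. by rewrite !orbit_ptE mul_cyclic_frac. Qed.

Lemma orbit_pt_ge0_lt1 j : 0 <= orbit_pt d x j < 1.
Proof. by rewrite orbit_ptE cyclic_frac_ge0_lt1. Qed.

End QtupleOrbit.

Section LeadingDigit.
Local Open Scope ring_scope.
Variables (R : realDomainType) (d : nat).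
Hypothesis d_gt0 : (0 < d)%N.

Let d_pos : 0 < d%:R :> R. Proof. by rewrite ltr0n. Qed.

Lemma lt_of_digit_lt (m n : nat) (x y x' y' : R) :
  (m < n)%N -> x' < 1 -> 0 <= y' ->
  d%:R * x = m%:R + x' -> d%:R * y = n%:R + y' -> x < y.
Proof.
move=> lt_mn x'_lt1 y'_ge0 dx dy; rewrite -(ltr_pM2l d_pos) dx dy.
apply: (@lt_le_trans _ _ m.+1%:R); first by rewrite -addn1 natrD ltrD2l.
by apply: (@le_trans _ _ n%:R); rewrite ?ler_nat ?lerDl.
Qed.

Lemma lt_eq_digit (m : nat) (x y x' y' : R) :
  d%:R * x = m%:R + x' -> d%:R * y = m%:R + y' -> (x < y) = (x' < y').
Proof. by move=> dx dy; rewrite -(ltr_pM2l d_pos) dx dy ltrD2l. Qed.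

End LeadingDigit.

Definition rotation_pt (d pstar : nat) (x : rat) (k : nat) : rat :=
  orbit_pt d x (k * pstar).

Section RotationOrder.
Variables (d q p pstar : nat) (x : rat).
Hypothesis q_gt0 : 0 < q.
Hypothesis p_inv : p * pstar %% q = 1.
Hypothesis orbit_q : orbit_size d x q.

Local Notation s := (rotation_pt d pstar x).
Local Notation S := (sorted_orbit d q x).

Lemma mul_pinv_p k : k * pstar * p %% q = k %% q.
Proof. by rewrite -mulnA [pstar * p]mulnC -modnMmr p_inv muln1. Qed.

Lemma rotation_pt_mod k : s k = s (k %% q).
Proof.
by rewrite /rotation_pt (orbit_pt_mod orbit_q) [RHS](orbit_pt_mod orbit_q) modnMml.
Qed.

Lemma rotation_ptD k : s (k + p) = sigma d (s k).
Proof.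
rewrite /rotation_pt mulnDl (orbit_pt_mod orbit_q) -modnDmr p_inv.
by rewrite addn1 -(orbit_pt_mod orbit_q).
Qed.

Lemma orbit_pt_rotation j : orbit_pt d x j = s (j * p %% q).
Proof.
rewrite /rotation_pt (orbit_pt_mod orbit_q) [RHS](orbit_pt_mod orbit_q).
by rewrite modnMml -mulnA -modnMmr p_inv muln1.
Qed.

Lemma rotation_pt_inj k l : k < q -> l < q -> s k = s l -> k = l.
Proof.
move=> kq lq; rewrite /rotation_pt (orbit_pt_mod orbit_q) [RHS](orbit_pt_mod orbit_q).
move/(orbit_pt_inj orbit_q) => /(_ (ltn_pmod _ q_gt0) (ltn_pmod _ q_gt0)) eq_kl.
have := congr1 (fun m => m * p %% q) eq_kl.
by rewrite /= !modnMml !mul_pinv_p !modn_small.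
Qed.

Lemma sorted_rotation_lt k l :
  sorted <%R (map s (iota 0 q)) -> k < l -> l < q -> (s k < s l)%R.
Proof.
move=> sorted_s kl lq; have kq := ltn_trans kl lq.
have /(_ k l) := sorted_ltn_nth lt_trans 0%R sorted_s.
by rewrite !inE size_map size_iota !(nth_map 0) ?size_iota // !nth_iota //; apply.
Qed.

Lemma sorted_rotationP :
  reflect (forall k, k.+1 < q -> (s k < s k.+1)%R) (sorted <%R (map s (iota 0 q))).
Proof.
apply: (iffP (sortedP 0%R)); rewrite size_map size_iota => incr k kq; have := incr k kq;
  by rewrite !(nth_map 0) ?size_iota ?nth_iota // ltnW.
Qed.

Lemma sorted_orbit_rotation :
  least_in_orbit d q x -> rotational d q p x -> S = map s (iota 0 q).
Proof.
move=> least rot.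
have S0 : nth 0%R S 0 = x.
  have xS : x \in S by rewrite mem_sorted_orbit; apply/mapP; exists 0; rewrite ?mem_iota.
  apply/le_anti; rewrite least ?andbT -?mem_sorted_orbit ?mem_nth ?size_sorted_orbit //.
  rewrite -{2}(nth_index 0%R xS); apply: (sorted_leq_nth le_trans le_refl).
  - by rewrite sort_le_sorted.
  - by rewrite inE size_sorted_orbit.
  - by rewrite inE index_mem.
  - exact: leq0n.
have S_orbit j : nth 0%R S (j * p %% q) = orbit_pt d x j.
  elim: j => [|j IH]; first by rewrite mod0n S0.
  by rewrite mulSnr -modnDml -rot ?ltn_pmod // IH.
apply: (@eq_from_nth _ 0%R) => [|k].
  by rewrite size_sorted_orbit size_map size_iota.
rewrite size_sorted_orbit => kq; rewrite (nth_map 0) ?size_iota // nth_iota //.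
by rewrite add0n /rotation_pt -S_orbit mul_pinv_p modn_small.
Qed.

Lemma least_rotational_of_sorted :
  sorted <%R (map s (iota 0 q)) -> least_in_orbit d q x /\ rotational d q p x.
Proof.
move=> sorted_s.
have mem_s : map s (iota 0 q) =i orbit_seq d q x.
  move=> y; apply/mapP/mapP => [[k _ ->]|[j _ ->]].
    exists (k * pstar %% q); first by rewrite mem_iota ltn_pmod.
    exact: (orbit_pt_mod orbit_q).
  exists (j * p %% q); first by rewrite mem_iota ltn_pmod.
  exact: orbit_pt_rotation.
have S_eq : S = map s (iota 0 q).
  apply: lt_sorted_eq => //; first exact: sorted_orbit_lt.
  by move=> y; rewrite mem_sorted_orbit mem_s.
have nth_S k : k < q -> nth 0%R S k = s k.
  by move=> kq; rewrite S_eq (nth_map 0) ?size_iota // nth_iota.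
split=> [y | i iq].
  rewrite -mem_s => /mapP[k]; rewrite mem_iota add0n => /andP[_ kq] ->.
  have -> : x = s 0 by [].
  by case: (posnP k) => [-> // | k_gt0]; rewrite ltW ?sorted_rotation_lt.
by rewrite !nth_S ?ltn_pmod // -rotation_ptD -rotation_pt_mod.
Qed.

Lemma least_rotational_iff_sorted :
  least_in_orbit d q x /\ rotational d q p x <-> sorted <%R (map s (iota 0 q)).
Proof.
split=> [[least rot] | ]; last exact: least_rotational_of_sorted.
by rewrite -sorted_orbit_rotation //; exact: sorted_orbit_lt.
Qed.

End RotationOrder.

Section QtupleRotation.
Variables (d q p pstar : nat) (a : nat -> nat).
Hypotheses (d_ge2 : 2 <= d) (q_ge2 : 2 <= q) (p_gt0 : 0 < p) (p_le : p <= q - 1).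
Hypothesis p_inv : p * pstar %% q = 1.
Hypothesis digit_lt : forall i, i < q -> a i < d.
Hypothesis orbit_q : orbit_size d (qtuple_pt d q a) q.

Local Notation x := (qtuple_pt d q a).
Local Notation s := (rotation_pt d pstar x).
Local Notation c k := (a (k * pstar %% q)).

Let q_gt0 : 0 < q. Proof. exact: ltnW. Qed.

Lemma rotation_pt_digit k : (d%:R * s k = (c k)%:R + sigma d (s k))%R.
Proof. exact: orbit_pt_digit. Qed.

Lemma rotation_pt_lt_of_digit_lt k l : c k < c l -> (s k < s l)%R.
Proof.
move=> lt_c; apply: (lt_of_digit_lt (ltnW d_ge2) lt_c _ _ (rotation_pt_digit k)
  (rotation_pt_digit l)).
- by case/andP: (orbit_pt_ge0_lt1 d_ge2 q_ge2 digit_lt orbit_q (k * pstar).+1).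
- by case/andP: (orbit_pt_ge0_lt1 d_ge2 q_ge2 digit_lt orbit_q (l * pstar).+1).
Qed.

Lemma digit_le_of_rotation_pt_lt k l : (s k < s l)%R -> c k <= c l.
Proof.
move=> lt_s; rewrite leqNgt; apply/negP => /rotation_pt_lt_of_digit_lt.
by move/(lt_trans lt_s); rewrite ltxx.
Qed.

Lemma rotation_pt_lt_eq_digit k l :
  c k = c l -> (s k < s l)%R = (sigma d (s k) < sigma d (s l))%R.
Proof.
move=> eq_c; apply: (lt_eq_digit (ltnW d_ge2) (rotation_pt_digit k)).
by rewrite eq_c; exact: rotation_pt_digit.
Qed.

Lemma digits_of_sorted_rotation : sorted <%R (map s (iota 0 q)) ->
  (forall k, k <= q - 2 -> c k <= c k.+1) /\ c (q - p - 1) < c (q - p).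
Proof.
move=> sorted_s.
have c_le k : k <= q - 2 -> c k <= c k.+1.
  move=> kq; apply/digit_le_of_rotation_pt_lt/(sorted_rotation_lt sorted_s) => //.
  by lia.
have c_le0 : c (q - p - 1) <= c (q - p).
  by have := c_le (q - p - 1); rewrite (_ : (q - p - 1).+1 = q - p); [apply; lia | lia].
split=> //; rewrite ltn_neqAle c_le0 andbT; apply/eqP => eq_c.
have lt_shift : (s (q - p - 1 + p) < s (q - p + p))%R.
  rewrite !(rotation_ptD p_inv orbit_q) -rotation_pt_lt_eq_digit //.
  by rewrite (sorted_rotation_lt sorted_s) //; lia.
have lt_last : (s 0 < s (q - p - 1 + p))%R.
  by rewrite (sorted_rotation_lt sorted_s) //; lia.
have q_eq : q - p + p = q by lia.
move: (lt_trans lt_last lt_shift).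
by rewrite q_eq [s q](rotation_pt_mod pstar orbit_q) modnn ltxx.
Qed.

Section Descent.
Hypothesis c_le : forall k, k <= q - 2 -> c k <= c k.+1.
Hypothesis c_lt : c (q - p - 1) < c (q - p).

Let descent k := (k.+1 < q) && (s k.+1 < s k)%R.

Lemma descent_digit_eq k : descent k -> c k.+1 = c k.
Proof.
case/andP => kq lt_s; apply/eqP; rewrite eqn_leq c_le ?andbT; last by lia.
rewrite leqNgt; apply/negP => /rotation_pt_lt_of_digit_lt.
by move/(lt_trans lt_s); rewrite ltxx.
Qed.

Lemma descent_neq k : descent k -> k != q - p - 1.
Proof.
move=> desc_k; apply/eqP => k_eq; have succ_k : k.+1 = q - p by lia.
by move: c_lt; rewrite -k_eq -succ_k (descent_digit_eq desc_k) ltnn.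
Qed.

Lemma descent_shift k : descent k -> descent ((k + p) %% q).
Proof.
move=> desc_k; have k_neq := descent_neq desc_k; have /andP[kq lt_s] := desc_k.
have kpq : ((k + p) %% q).+1 < q.
  move/eqP: k_neq => k_neq; case: (ltnP (k + p) q) => [kp_lt | kp_ge].
    by rewrite modn_small //; lia.
  by rewrite -(subnK kp_ge) modnDr modn_small; lia.
have succ_mod : ((k + p) %% q).+1 %% q = (k.+1 + p) %% q.
  by rewrite -addn1 modnDml addn1 addSn.
rewrite /descent kpq (rotation_pt_mod pstar orbit_q) succ_mod.
rewrite -!(rotation_pt_mod pstar orbit_q) !(rotation_ptD p_inv orbit_q).
by rewrite -rotation_pt_lt_eq_digit ?descent_digit_eq.
Qed.

Lemma no_descent k : ~~ descent k.
Proof.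
apply/negP => desc_k; have kq : k < q by case/andP: desc_k => /ltnW.
have desc_iter m : descent ((k + m * p) %% q).
  elim: m => [|m IH]; first by rewrite addn0 modn_small.
  by have := descent_shift IH; rewrite modnDml mulSnr addnA.
have := desc_iter ((q - p - 1 + (q - k)) * pstar).
rewrite -modnDmr (mul_pinv_p p_inv) modnDmr.
have -> : k + (q - p - 1 + (q - k)) = q + (q - p - 1) by lia.
by rewrite modnDl modn_small; [move/descent_neq; rewrite eqxx | lia].
Qed.

Lemma sorted_rotation_of_digits : sorted <%R (map s (iota 0 q)).
Proof.
apply/sorted_rotationP => k kq; have := no_descent k.
rewrite /descent kq /= -leNgt le_eqVlt => /orP[/eqP | //].
by move/(rotation_pt_inj q_gt0 p_inv orbit_q) => /(_ (ltnW kq) kq) /n_Sn.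
Qed.

End Descent.

Lemma sorted_rotation_iff_digits :
  sorted <%R (map s (iota 0 q)) <->
  (forall k, k <= q - 2 -> c k <= c k.+1) /\ c (q - p - 1) < c (q - p).
Proof.
split; first exact: digits_of_sorted_rotation.
by case=> c_le c_lt; exact: sorted_rotation_of_digits.
Qed.

End QtupleRotation.

Theorem corollary3p2 (d q p pstar : nat) (a : nat -> nat) :
  (2 <= d)%N -> (2 <= q)%N ->
  (1 <= p)%N -> (p <= q - 1)%N -> coprime p q ->
  ((p * pstar) %% q = 1)%N ->
  (forall i, (i < q)%N -> (a i < d)%N) ->
  orbit_size d (qtuple_pt d q a) q ->
  (least_in_orbit d q (qtuple_pt d q a) /\ rotational d q p (qtuple_pt d q a)
   <->
   (forall k, (k <= q - 2)%N ->
      (a ((k * pstar) %% q) <= a ((k.+1 * pstar) %% q))%N) /\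
   (a (((q - p - 1) * pstar) %% q) < a (((q - p) * pstar) %% q))%N).
Proof.
move=> d_ge2 q_ge2 p_gt0 p_le _ p_inv digit_lt orbit_q.
rewrite (least_rotational_iff_sorted (ltnW q_ge2) p_inv orbit_q).
exact: sorted_rotation_iff_digits.
Qed.
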